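(* Let $n\ge1$ be an integer. The following are equivalent: (a) $n\le3$; (b) for every $j\in\{1,\dots,n+2\}$, the function $\lambda\mapsto\lambda_{n,j}(\lambda)-1/n$ does not change sign on the interval $(1/n,\infty)$.
   Context: For an integer $n\ge1$ let $f_n(x)=(1+x)^{n+1}/x$ for $x>0$. The function $f_n$ is strictly decreasing on $(0,1/n]$ and strictly increasing on $[1/n,\infty)$. Regular graph exponents (Schmidt–Summerer), defined algebraically. For $\lambda\in[1/n,\infty)$ let $\mu\in(0,1/n]$ be the unique solution of $f_n(\mu)=f_n(\lambda)$, and set $$\lambda_{n,j}(\lambda)=\lambda^{1-\frac{j-1}{n+1}}\mu^{\frac{j-1}{n+1}},\qquad 1\le j\le n+2 .$$ All ratios $\lambda_{n,j}/\lambda_{n,j+1}$ are equal. These are the exponents $\lambda_{n,j}$ of the regular graph in dimension $n$ with parameter $\lambda_n=\lambda$. *)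

From Stdlib Require Import Reals Lra Lia ClassicalEpsilon.
Open Scope R_scope.

Definition f (n : nat) (x : R) : R := (1 + x) ^ (n + 1) / x.

(* mu_n(lambda): the unique mu in (0, 1/n] with f_n(mu) = f_n(lambda)
   (for lambda >= 1/n); chosen by Hilbert's epsilon, which returns that
   unique solution whenever it exists. *)
Definition mu (n : nat) (lam : R) : R :=
  epsilon (inhabits 0) (fun m => 0 < m <= 1 / INR n /\ f n m = f n lam).

Definition lambda_nj (n j : nat) (lam : R) : R :=
  let e := (INR j - 1) / (INR n + 1) in
  Rpower lam (1 - e) * Rpower (mu n lam) e.

Definition no_sign_change_on_ray (g : R -> R) (a : R) : Prop :=
  ~ (exists x y, a < x /\ a < y /\ g x < 0 /\ 0 < g y).

From Stdlib Require Import Reals Lra Lia Psatz ClassicalEpsilon.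
Open Scope R_scope.

(* The regular graph is parametrized by the common ratio t > 1 of consecutive
   exponents: f_n(mu) = f_n(lambda) with lambda = t^(n+1) mu forces
   mu = (t - 1) / (t^(n+1) - t) = 1 / (t + ... + t^n), and then
   lambda_{n,j} = t^(n+2-j) mu.  Since t + ... + t^n <= n t^n, every
   lambda_{n,j} with j <= 2 stays above 1/n.  For j >= 3 one has
   lambda_{n,j} <= lambda_{n,3} = t^(n-1) / (t + ... + t^n), which is at most
   1/n for n <= 3, but exceeds 1/n at t = 2 and drops below 1/n at t = n as
   soon as n >= 4. *)

Lemma bernoulli_ineq (x : R) (n : nat) : -1 <= x -> 1 + INR n * x <= (1 + x) ^ n.
Proof.
  intros Hx; induction n as [|n IH]; [simpl; lra|].
  rewrite S_INR; simpl.
  assert (0 <= INR n * (x * x)) by (apply Rmult_le_pos; [apply pos_INR | nra]).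
  nra.
Qed.

Lemma pow_succ_sub1_le (t : R) (n : nat) :
  1 <= t -> t ^ S n - 1 <= INR (S n) * (t - 1) * t ^ n.
Proof.
  intros Ht; induction n as [|n IH]; [simpl; lra|].
  assert (Htn : 1 <= t ^ n) by (apply pow_R1_Rle; lra).
  assert (Hstep : t * (t ^ S n - 1) <= t * (INR (S n) * (t - 1) * t ^ n))
    by (apply Rmult_le_compat_l; lra).
  assert (0 <= (t - 1) * (t ^ S n - 1))
    by (apply Rmult_le_pos; [lra | assert (1 <= t ^ S n) by (apply pow_R1_Rle; lra); lra]).
  repeat rewrite S_INR in *; simpl in *; nra.
Qed.

Lemma f_inv_le (n : nat) (z : R) : (0 < n)%nat -> 0 < z -> f n (1 / INR n) <= f n z.
Proof.
  intros Hn Hz; unfold f.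
  assert (Hn0 : 0 < INR n) by (apply lt_0_INR; lia).
  set (s := INR n * (1 + z) / (INR n + 1)).
  assert (Hs : 1 + z = (1 + 1 / INR n) * s) by (unfold s; field; lra).
  (* Bernoulli at s - 1 gives s^(n+1) >= n z, which is f_n(z) >= f_n(1/n). *)
  assert (Hbern : INR n * z <= s ^ (n + 1)).
  { assert (0 <= s) by (unfold s; apply Rmult_le_pos; [nra | apply Rlt_le, Rinv_0_lt_compat; lra]).
    assert (Hb := bernoulli_ineq (s - 1) (n + 1) ltac:(lra)).
    replace (1 + (s - 1)) with s in Hb by ring.
    apply Rle_trans with (2 := Hb); rewrite plus_INR; simpl (INR 1).
    right; unfold s; field; lra. }
  assert (HC : 0 < (1 + 1 / INR n) ^ (n + 1)).
  { apply pow_lt; assert (0 < 1 / INR n) by (apply Rdiv_lt_0_compat; lra); lra. }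
  rewrite Hs, Rpow_mult_distr.
  apply (Rmult_le_reg_r z); [lra|].
  replace ((1 + 1 / INR n) ^ (n + 1) * s ^ (n + 1) / z * z)
    with ((1 + 1 / INR n) ^ (n + 1) * s ^ (n + 1)) by (field; lra).
  replace ((1 + 1 / INR n) ^ (n + 1) / (1 / INR n) * z)
    with ((1 + 1 / INR n) ^ (n + 1) * (INR n * z)) by (field; lra).
  apply Rmult_le_compat_l; lra.
Qed.

Lemma f_attained_below_inv (n : nat) (x : R) : (0 < n)%nat -> 0 < x ->
  exists y, 0 < y <= 1 / INR n /\ f n y = f n x.
Proof.
  intros Hn Hx.
  assert (Hn0 : 0 < INR n) by (apply lt_0_INR; lia).
  set (F := f n x).
  assert (Hmin := f_inv_le n x Hn Hx); fold F in Hmin.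
  assert (HnF : INR n <= F).
  { apply Rle_trans with (2 := Hmin); unfold f.
    assert (1 <= (1 + 1 / INR n) ^ (n + 1))
      by (apply pow_R1_Rle; assert (0 < 1 / INR n) by (apply Rdiv_lt_0_compat; lra); lra).
    replace ((1 + 1 / INR n) ^ (n + 1) / (1 / INR n))
      with (INR n * (1 + 1 / INR n) ^ (n + 1)) by (field; lra).
    nra. }
  (* A zero of h in [1/F, 1/n] is a solution of f_n(y) = F. *)
  set (h := fun z => F * z - (1 + z) ^ (n + 1)).
  assert (Hcont : continuity h) by (unfold h; reg).
  assert (Hlo : h (1 / F) <= 0).
  { unfold h; replace (F * (1 / F)) with 1 by (field; lra).
    assert (1 <= (1 + 1 / F) ^ (n + 1))
      by (apply pow_R1_Rle; assert (0 < 1 / F) by (apply Rdiv_lt_0_compat; lra); lra).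
    lra. }
  assert (Hhi : 0 <= h (1 / INR n)).
  { unfold h; unfold f in Hmin.
    apply (Rmult_le_reg_l (INR n)); [lra|].
    replace (INR n * (F * (1 / INR n) - (1 + 1 / INR n) ^ (n + 1)))
      with (F - (1 + 1 / INR n) ^ (n + 1) / (1 / INR n)) by (field; lra).
    lra. }
  assert (Hle : 1 / F <= 1 / INR n)
    by (apply Rmult_le_reg_r with (F * INR n); [nra|]; field_simplify; lra).
  destruct (IVT_cor h (1 / F) (1 / INR n) Hcont Hle ltac:(nra)) as [y [Hy Hhy]].
  assert (0 < 1 / F) by (apply Rdiv_lt_0_compat; lra).
  exists y; split; [lra|].
  unfold h in Hhy; unfold f; fold F.
  apply (Rmult_eq_reg_r y); [|lra].
  field_simplify; lra.
Qed.

Lemma mu_spec (n : nat) (x : R) : (0 < n)%nat -> 0 < x ->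
  0 < mu n x <= 1 / INR n /\ f n (mu n x) = f n x.
Proof.
  intros Hn Hx; unfold mu.
  apply (epsilon_spec (inhabits 0) (fun m => 0 < m <= 1 / INR n /\ f n m = f n x)).
  exact (f_attained_below_inv n x Hn Hx).
Qed.

Definition mu_of_ratio (n : nat) (t : R) : R := (t - 1) / (t ^ (n + 1) - t).

Definition lam_of_ratio (n : nat) (t : R) : R := t ^ (n + 1) * mu_of_ratio n t.

Section Ratio.

Variables (n : nat) (t : R).
Hypotheses (Hn : (0 < n)%nat) (Ht : 1 < t).

Lemma ratio_denom_pos : 0 < t ^ (n + 1) - t.
Proof.
  assert (1 < t ^ n) by (apply Rlt_pow_R1; [lra | lia]).
  rewrite Nat.add_1_r; simpl; nra.
Qed.

Lemma mu_of_ratio_pos : 0 < mu_of_ratio n t.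
Proof. apply Rdiv_lt_0_compat; [lra | exact ratio_denom_pos]. Qed.

Lemma mu_of_ratio_mul : mu_of_ratio n t * (t ^ (n + 1) - t) = t - 1.
Proof. assert (H := ratio_denom_pos); unfold mu_of_ratio; field; lra. Qed.

Lemma lam_of_ratio_succ : 1 + lam_of_ratio n t = t * (1 + mu_of_ratio n t).
Proof. assert (H := mu_of_ratio_mul); unfold lam_of_ratio; nra. Qed.

Lemma f_lam_of_ratio : f n (lam_of_ratio n t) = f n (mu_of_ratio n t).
Proof.
  assert (Hm := mu_of_ratio_pos).
  assert (0 < t ^ (n + 1)) by (apply pow_lt; lra).
  unfold f; rewrite lam_of_ratio_succ, Rpow_mult_distr; unfold lam_of_ratio.
  field; lra.
Qed.

Lemma mu_of_ratio_le_inv : mu_of_ratio n t <= 1 / INR n.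
Proof.
  assert (Hn0 : 0 < INR n) by (apply lt_0_INR; lia).
  assert (Hb := bernoulli_ineq (t - 1) n ltac:(lra)).
  replace (1 + (t - 1)) with t in Hb by ring.
  assert (Hd := ratio_denom_pos); assert (Hm := mu_of_ratio_mul).
  assert (HS : t ^ (n + 1) = t * t ^ n) by (rewrite Nat.add_1_r; reflexivity).
  apply (Rmult_le_reg_r (INR n * (t ^ (n + 1) - t))); [nra|].
  replace (1 / INR n * (INR n * (t ^ (n + 1) - t))) with (t ^ (n + 1) - t) by (field; lra).
  replace (mu_of_ratio n t * (INR n * (t ^ (n + 1) - t))) with (INR n * (t - 1)) by nra.
  nra.
Qed.

Lemma inv_le_pow_mu_of_ratio : 1 / INR n <= t ^ n * mu_of_ratio n t.
Proof.
  assert (Hn0 : 0 < INR n) by (apply lt_0_INR; lia).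
  assert (Hd := ratio_denom_pos); assert (Hm := mu_of_ratio_mul).
  assert (Hkey : t ^ (n + 1) - t <= INR n * (t - 1) * t ^ n).
  { destruct n as [|m]; [lia|].
    assert (HB := pow_succ_sub1_le t m ltac:(lra)).
    apply Rle_trans with (t * (INR (S m) * (t - 1) * t ^ m)).
    - replace (t ^ (S m + 1) - t) with (t * (t ^ S m - 1)) by (rewrite Nat.add_1_r; simpl; ring).
      apply Rmult_le_compat_l; lra.
    - right; simpl; ring. }
  apply (Rmult_le_reg_r (INR n * (t ^ (n + 1) - t))); [nra|].
  replace (1 / INR n * (INR n * (t ^ (n + 1) - t))) with (t ^ (n + 1) - t) by (field; lra).
  replace (t ^ n * mu_of_ratio n t * (INR n * (t ^ (n + 1) - t)))
    with (INR n * (t - 1) * t ^ n) by (rewrite <- Hm; ring).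
  exact Hkey.
Qed.

Lemma inv_lt_lam_of_ratio : 1 / INR n < lam_of_ratio n t.
Proof.
  assert (H := inv_le_pow_mu_of_ratio); assert (Hm := mu_of_ratio_pos).
  assert (0 < t ^ n) by (apply pow_lt; lra).
  assert (0 < (t - 1) * (t ^ n * mu_of_ratio n t))
    by (apply Rmult_lt_0_compat; [lra | apply Rmult_lt_0_compat; lra]).
  unfold lam_of_ratio; rewrite Nat.add_1_r; simpl; lra.
Qed.

End Ratio.

Lemma f_eq_ratio (n : nat) (a b : R) : (0 < n)%nat -> 0 < a < b -> f n a = f n b ->
  exists t, 1 < t /\ a = mu_of_ratio n t /\ b = lam_of_ratio n t.
Proof.
  intros Hn Hab Hf; unfold f in Hf.
  set (t := (1 + b) / (1 + a)); exists t.
  assert (Ht : 1 < t) by (unfold t; apply (Rmult_lt_reg_r (1 + a)); [lra|]; field_simplify; lra).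
  assert (Hb1 : 1 + b = t * (1 + a)) by (unfold t; field; lra).
  assert (Hbt : b = t ^ (n + 1) * a).
  { rewrite Hb1, Rpow_mult_distr in Hf.
    assert (0 < (1 + a) ^ (n + 1)) by (apply pow_lt; lra).
    apply (Rmult_eq_reg_r ((1 + a) ^ (n + 1) / (a * b)));
      [| apply Rgt_not_eq, Rdiv_lt_0_compat; nra].
    transitivity ((1 + a) ^ (n + 1) / a); [field; lra|].
    rewrite Hf; field; lra. }
  assert (Hd := ratio_denom_pos n t Hn Ht).
  assert (Ha : a = mu_of_ratio n t).
  { unfold mu_of_ratio; apply (Rmult_eq_reg_r (t ^ (n + 1) - t)); [field_simplify; nra | lra]. }
  split; [exact Ht | split; [exact Ha|]].
  unfold lam_of_ratio; rewrite <- Ha; exact Hbt.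
Qed.

Lemma f_inj_le_inv (n : nat) (a b : R) : (0 < n)%nat ->
  0 < a <= 1 / INR n -> 0 < b <= 1 / INR n -> f n a = f n b -> a = b.
Proof.
  (* Of two distinct points with equal f_n-values, the larger one lies beyond 1/n. *)
  intros Hn Ha Hb Hf.
  destruct (Rtotal_order a b) as [Hlt | [Heq | Hgt]]; [| exact Heq |].
  - destruct (f_eq_ratio n a b Hn ltac:(lra) Hf) as (t & Ht & _ & ->).
    pose proof (inv_lt_lam_of_ratio n t Hn Ht); lra.
  - destruct (f_eq_ratio n b a Hn ltac:(lra) (eq_sym Hf)) as (t & Ht & _ & ->).
    pose proof (inv_lt_lam_of_ratio n t Hn Ht); lra.
Qed.

Lemma mu_lam_of_ratio (n : nat) (t : R) : (0 < n)%nat -> 1 < t ->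
  mu n (lam_of_ratio n t) = mu_of_ratio n t.
Proof.
  intros Hn Ht.
  assert (Hl := inv_lt_lam_of_ratio n t Hn Ht).
  assert (0 < 1 / INR n) by (apply Rdiv_lt_0_compat; [lra | apply lt_0_INR; lia]).
  destruct (mu_spec n (lam_of_ratio n t) Hn ltac:(lra)) as [Hmu Hf].
  apply (f_inj_le_inv n); [exact Hn | exact Hmu | |].
  - split; [apply mu_of_ratio_pos | apply mu_of_ratio_le_inv]; assumption.
  - rewrite Hf; apply f_lam_of_ratio; assumption.
Qed.

Lemma lambda_nj_lam_of_ratio (n j : nat) (t : R) : (0 < n)%nat -> 1 < t -> (j <= n + 2)%nat ->
  lambda_nj n j (lam_of_ratio n t) = t ^ (n + 2 - j) * mu_of_ratio n t.
Proof.
  intros Hn Ht Hj; assert (Hm := mu_of_ratio_pos n t Hn Ht).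
  assert (0 < t ^ (n + 1)) by (apply pow_lt; lra).
  assert (0 < t ^ (n + 2 - j)) by (apply pow_lt; lra).
  unfold lambda_nj; rewrite mu_lam_of_ratio by assumption.
  unfold lam_of_ratio, Rpower; rewrite <- exp_plus.
  rewrite <- (exp_ln (t ^ (n + 2 - j) * mu_of_ratio n t)) by nra.
  f_equal; rewrite !ln_mult, !ln_pow by lra.
  rewrite minus_INR, !plus_INR by lia; simpl (INR 2); simpl (INR 1).
  assert (0 <= INR n) by apply pos_INR.
  field; lra.
Qed.

Lemma lam_of_ratio_surj (n : nat) (x : R) : (0 < n)%nat -> 1 / INR n < x ->
  exists t, 1 < t /\ x = lam_of_ratio n t.
Proof.
  intros Hn Hx.
  assert (0 < 1 / INR n) by (apply Rdiv_lt_0_compat; [lra | apply lt_0_INR; lia]).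
  destruct (mu_spec n x Hn ltac:(lra)) as [Hmu Hf].
  destruct (f_eq_ratio n (mu n x) x Hn ltac:(lra) Hf) as (t & Ht & _ & Hxt).
  exists t; split; assumption.
Qed.

Lemma pow_pred_mu_of_ratio_le_inv (n : nat) (t : R) : (1 <= n <= 3)%nat -> 1 < t ->
  t ^ (n - 1) * mu_of_ratio n t <= 1 / INR n.
Proof.
  intros Hn Ht.
  assert (Hm := mu_of_ratio_mul n t ltac:(lia) Ht).
  assert (Hp := mu_of_ratio_pos n t ltac:(lia) Ht).
  set (m := mu_of_ratio n t) in *; clearbody m.
  (* Dividing the defining identity by t - 1 leaves m (t + ... + t^n) = 1. *)
  assert (Hc : (n = 1 \/ n = 2 \/ n = 3)%nat) by lia.
  destruct Hc as [-> | [-> | ->]]; simpl in *.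
  - assert (Hk : m * t = 1) by (apply (Rmult_eq_reg_r (t - 1)); [nra | lra]).
    nra.
  - assert (Hk : m * t * (t + 1) = 1) by (apply (Rmult_eq_reg_r (t - 1)); [nra | lra]).
    nra.
  - assert (Hk : m * t * (t * t + t + 1) = 1) by (apply (Rmult_eq_reg_r (t - 1)); [nra | lra]).
    nra.
Qed.

Lemma inv_lt_pow_pred_mu_of_ratio_two (n : nat) : (4 <= n)%nat ->
  1 / INR n < 2 ^ (n - 1) * mu_of_ratio n 2.
Proof.
  intros Hn.
  assert (Hm := mu_of_ratio_mul n 2 ltac:(lia) ltac:(lra)).
  assert (HnR : 4 <= INR n) by (replace 4 with (INR 4) by (simpl; lra); apply le_INR; lia).
  assert (HP : 1 <= 2 ^ (n - 1)) by (apply pow_R1_Rle; lra).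
  replace (2 ^ (n + 1)) with (4 * 2 ^ (n - 1)) in Hm
    by (replace (n + 1)%nat with (2 + (n - 1))%nat by lia; rewrite pow_add; simpl; ring).
  set (P := 2 ^ (n - 1)) in *; set (m := mu_of_ratio n 2) in *.
  apply (Rmult_lt_reg_r (INR n * (4 * P - 2))); [nra|].
  replace (1 / INR n * (INR n * (4 * P - 2))) with (4 * P - 2) by (field; lra).
  replace (P * m * (INR n * (4 * P - 2))) with (INR n * P * (m * (4 * P - 2))) by ring.
  rewrite Hm; nra.
Qed.

Lemma pow_pred_mu_of_ratio_self_lt_inv (n : nat) : (2 <= n)%nat ->
  INR n ^ (n - 1) * mu_of_ratio n (INR n) < 1 / INR n.
Proof.
  intros Hn.
  assert (HnR : 2 <= INR n) by (replace 2 with (INR 2) by (simpl; lra); apply le_INR; lia).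
  assert (Hm := mu_of_ratio_mul n (INR n) ltac:(lia) ltac:(lra)).
  assert (HP : 1 < INR n ^ (n - 1)) by (apply Rlt_pow_R1; [lra | lia]).
  replace (INR n ^ (n + 1)) with (INR n * INR n * INR n ^ (n - 1)) in Hm
    by (replace (n + 1)%nat with (2 + (n - 1))%nat by lia; rewrite pow_add; simpl; ring).
  set (P := INR n ^ (n - 1)) in *; set (m := mu_of_ratio n (INR n)) in *.
  set (N := INR n) in *.
  assert (HD : 0 < N * N * P - N) by (assert (1 < N * P) by nra; nra).
  apply (Rmult_lt_reg_r (N * (N * N * P - N))); [apply Rmult_lt_0_compat; lra|].
  replace (1 / N * (N * (N * N * P - N))) with (N * N * P - N) by (field; lra).
  replace (P * m * (N * (N * N * P - N))) with (N * P * (m * (N * N * P - N))) by ring.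
  rewrite Hm; nra.
Qed.

Lemma no_sign_change_on_ray_of_sign (g : R -> R) (a : R) :
  (forall x, a < x -> 0 <= g x) \/ (forall x, a < x -> g x <= 0) ->
  no_sign_change_on_ray g a.
Proof.
  intros [Hge | Hle] (x & y & Hx & Hy & Hgx & Hgy).
  - specialize (Hge x Hx); lra.
  - specialize (Hle y Hy); lra.
Qed.

Lemma inv_le_lambda_nj (n j : nat) (x : R) : (0 < n)%nat -> (j <= 2)%nat -> 1 / INR n < x ->
  1 / INR n <= lambda_nj n j x.
Proof.
  intros Hn Hj Hx.
  destruct (lam_of_ratio_surj n x Hn Hx) as (t & Ht & ->).
  rewrite lambda_nj_lam_of_ratio by (assumption || lia).
  apply Rle_trans with (1 := inv_le_pow_mu_of_ratio n t Hn Ht).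
  apply Rmult_le_compat_r; [apply Rlt_le, mu_of_ratio_pos; assumption|].
  apply Rle_pow; [lra | lia].
Qed.

Lemma lambda_nj_le_inv (n j : nat) (x : R) : (1 <= n <= 3)%nat -> (3 <= j <= n + 2)%nat ->
  1 / INR n < x -> lambda_nj n j x <= 1 / INR n.
Proof.
  intros Hn Hj Hx.
  destruct (lam_of_ratio_surj n x ltac:(lia) Hx) as (t & Ht & ->).
  rewrite lambda_nj_lam_of_ratio by (lia || lra).
  apply Rle_trans with (2 := pow_pred_mu_of_ratio_le_inv n t Hn Ht).
  apply Rmult_le_compat_r; [apply Rlt_le, mu_of_ratio_pos; (lia || lra)|].
  apply Rle_pow; [lra | lia].
Qed.

Theorem corollary2p6 (n : nat) (hn : (1 <= n)%nat) :
  (n <= 3)%nat <->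
  (forall j : nat, (1 <= j <= n + 2)%nat ->
     no_sign_change_on_ray (fun lam => lambda_nj n j lam - 1 / INR n) (1 / INR n)).
Proof.
  split.
  - intros Hn3 j Hj; apply no_sign_change_on_ray_of_sign.
    destruct (Nat.le_gt_cases j 2) as [Hj2 | Hj3]; [left | right]; intros x Hx.
    + pose proof (inv_le_lambda_nj n j x hn Hj2 Hx); lra.
    + pose proof (lambda_nj_le_inv n j x ltac:(lia) ltac:(lia) Hx); lra.
  - intros Hsign; apply Nat.nlt_ge; intros Hn4.
    apply (Hsign 3%nat ltac:(lia)).
    exists (lam_of_ratio n (INR n)), (lam_of_ratio n 2); cbv beta.
    assert (HnR : 1 < INR n) by (apply (lt_INR 1); lia).
    rewrite !lambda_nj_lam_of_ratio by (lia || lra).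
    replace (n + 2 - 3)%nat with (n - 1)%nat by lia.
    pose proof (pow_pred_mu_of_ratio_self_lt_inv n ltac:(lia)).
    pose proof (inv_lt_pow_pred_mu_of_ratio_two n Hn4).
    repeat split; try (apply inv_lt_lam_of_ratio; (lia || lra)); lra.
Qed.
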